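(* Let $n\ge2$ and let $V$ be the potential of the planar $n$-body problem with all masses equal. Let $c\in\mathbb{R}^{2n}$ be the regular $n$-gon configuration $c_i=\alpha\cos\frac{2\pi(i-1)}n$, $c_{i+n}=\alpha\sin\frac{2\pi(i-1)}n$ ($i=1,\dots,n$), with $\alpha>0$ chosen so that $c$ is a Darboux point with multiplier $-1$. Let $v\in\mathbb{R}^{2n}$ be given by $v_i=\cos\frac{4\pi(i-1)}n$, $v_{i+n}=\sin\frac{4\pi(i-1)}n$. Then $Wv=J^{-1}WJv=\lambda v$ with $$\lambda=2-\frac{2\sin(\pi/n)}{1-\cos(\pi/n)}\Big(\sum_{j=1}^{n-1}\frac1{\sin(\pi j/n)}\Big)^{-1}.$$
   Context: Positions $q\in\mathbb{C}^{2n}$, body $i$ at $(q_i,q_{i+n})$, masses $m_i=m>0$ for all $i$ and $m_{i+n}:=m_i$. $V(q)=\sum_{i<j}\frac{m_im_j}{\sqrt{(q_i-q_j)^2+(q_{i+n}-q_{j+n})^2}}$. Darboux point with multiplier $-1$: $\partial V/\partial q_k(c)=-m_kc_k$ for all $k$. $W_{k,l}=\frac1{m_k}\frac{\partial^2V}{\partial q_k\partial q_l}(c)$. $J=\begin{pmatrix}0&-I_n\\ I_n&0\end{pmatrix}$. *)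

From Stdlib Require Import Reals Lra Lia.
Open Scope R_scope.

(* Configurations q : nat -> R, with 0-based indices 0..2n-1;
   body i (0 <= i < n) sits at (q i, q (i+n)). *)

Fixpoint rsum (n : nat) (f : nat -> R) : R :=
  match n with
  | O => 0
  | S k => rsum k f + f k
  end.

Definition dist2 (n : nat) (q : nat -> R) (i j : nat) : R :=
  sqrt ((q i - q j) ^ 2 + (q (i + n)%nat - q (j + n)%nat) ^ 2).

Definition Vpot (n : nat) (m : R) (q : nat -> R) : R :=
  rsum n (fun j => rsum j (fun i => m * m / dist2 n q i j)).

Definition upd (q : nat -> R) (k : nat) (t : R) : nat -> R :=
  fun i => if Nat.eqb i k then t else q i.

Definition collision_free (n : nat) (q : nat -> R) : Prop :=
  forall i j, (i < n)%nat -> (j < n)%nat -> i <> j ->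
    (q i - q j) ^ 2 + (q (i + n)%nat - q (j + n)%nat) ^ 2 <> 0.

Definition is_partial (f : (nat -> R) -> R) (q : nat -> R) (k : nat) (d : R) : Prop :=
  derivable_pt_lim (fun t => f (upd q k t)) (q k) d.

(* regular n-gon of radius alpha, 0-based version of c_i, c_{i+n} *)
Definition ngon (n : nat) (alpha : R) (k : nat) : R :=
  if Nat.ltb k n then alpha * cos (2 * PI * INR k / INR n)
  else alpha * sin (2 * PI * INR (k - n) / INR n).

Definition vvec (n : nat) (k : nat) : R :=
  if Nat.ltb k n then cos (4 * PI * INR k / INR n)
  else sin (4 * PI * INR (k - n) / INR n).

Definition mv (n : nat) (A : nat -> nat -> R) (x : nat -> R) : nat -> R :=
  fun k => rsum (2 * n) (fun l => A k l * x l).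

(* J = [[0, -I],[I, 0]] and its inverse J^{-1} = -J = [[0, I],[-I, 0]] *)
Definition Jmul (n : nat) (x : nat -> R) : nat -> R :=
  fun k => if Nat.ltb k n then - x (k + n)%nat else x (k - n)%nat.
Definition Jinvmul (n : nat) (x : nat -> R) : nat -> R :=
  fun k => if Nat.ltb k n then x (k + n)%nat else - x (k - n)%nat.

Definition lambda14 (n : nat) : R :=
  2 - 2 * sin (PI / INR n) / (1 - cos (PI / INR n))
      * / rsum (n - 1) (fun j => / sin (PI * INR (S j) / INR n)).

(* 1. Calculus: [grad] and [hess] are closed forms of the first and second
      partial derivatives of V on collision-free configurations.  Since
      collision-freeness is open along coordinate lines, uniqueness of
      derivatives identifies the abstract D and H of the statement with them.
   2. Applied to a vector, [hess] regroups as a sum over pairs of bodies, and the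
      row of body p only involves the pairs {p, j}: their terms are the pair
      field [coulomb_x] and its variations [dipole_x], [dipole_y].
   3. On the polygon, body j is seen from body p under the angle 2t with
      t = pi (e+1)/n; in polar coordinates the pair terms become explicit
      trigonometric functions of t.
   4. Summing over t, the terms odd under t -> pi - t cancel and what remains is
      sum 1/sin t - sum sin t; the latter has a closed form by telescoping.
   5. Row 0 of the Darboux condition gives m * sum 1/sin t = 4 alpha^3, so every
      w_b (unit vector at angle 2 theta_a + b on body a) satisfies W w_b = lambda w_b.
      As v = w_0, J v = w_(pi/2) and J^-1 w_(pi/2) = v, the theorem follows. *)

From Stdlib Require Import Reals Lra Lia.
Open Scope R_scope.

Lemma rsum_ext N f g : (forall i, (i < N)%nat -> f i = g i) -> rsum N f = rsum N g.
Proof. induction N as [|N IH]; simpl; intros Hfg; auto. rewrite IH, Hfg; auto. Qed.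

Lemma rsum_plus N f g : rsum N (fun i => f i + g i) = rsum N f + rsum N g.
Proof. induction N as [|N IH]; simpl; [ring | rewrite IH; ring]. Qed.

Lemma rsum_minus N f g : rsum N (fun i => f i - g i) = rsum N f - rsum N g.
Proof. induction N as [|N IH]; simpl; [ring | rewrite IH; ring]. Qed.

Lemma rsum_scal N a f : rsum N (fun i => a * f i) = a * rsum N f.
Proof. induction N as [|N IH]; simpl; [ring | rewrite IH; ring]. Qed.

Lemma rsum_mulr N a f : rsum N (fun i => f i * a) = rsum N f * a.
Proof. induction N as [|N IH]; simpl; [ring | rewrite IH; ring]. Qed.

Lemma rsum_opp N f : rsum N (fun i => - f i) = - rsum N f.
Proof. induction N as [|N IH]; simpl; [ring | rewrite IH; ring]. Qed.

Lemma rsum_zero N f : (forall i, (i < N)%nat -> f i = 0) -> rsum N f = 0.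
Proof. induction N as [|N IH]; simpl; intros Hf; auto. rewrite IH, Hf; auto; ring. Qed.

Lemma rsum_pos N f : (1 <= N)%nat -> (forall i, (i < N)%nat -> 0 < f i) -> 0 < rsum N f.
Proof.
  induction N as [|N IH]; intros HN Hf; [lia |]. simpl.
  destruct (Nat.eq_dec N 0) as [->|HN0]; simpl.
  - rewrite Rplus_0_l. apply Hf; lia.
  - assert (0 < rsum N f) by (apply IH; [lia | intros; apply Hf; lia]).
    assert (0 < f N) by (apply Hf; lia). lra.
Qed.

Lemma rsum_swap N M (g : nat -> nat -> R) :
  rsum N (fun l => rsum M (fun j => g l j)) = rsum M (fun j => rsum N (fun l => g l j)).
Proof.
  induction N as [|N IH]; simpl.
  - symmetry; apply rsum_zero; auto.
  - rewrite IH, <- rsum_plus. reflexivity.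
Qed.

Lemma rsum_split a b f : rsum (a + b) f = rsum a f + rsum b (fun e => f (a + e)%nat).
Proof.
  induction b as [|b IH]; simpl.
  - rewrite Nat.add_0_r. ring.
  - rewrite Nat.add_succ_r. simpl. rewrite IH. ring.
Qed.

Lemma rsum_rev N f : rsum N f = rsum N (fun e => f (N - 1 - e)%nat).
Proof.
  induction N as [|N IH]; auto.
  change (rsum (S N) f) with (rsum N f + f N).
  rewrite (rsum_split 1 N), IH. simpl.
  rewrite Rplus_0_l, Rplus_comm. f_equal; [f_equal; lia |].
  apply rsum_ext; intros e He. f_equal. lia.
Qed.

(** The Kronecker delta [kron k a = 1] iff [a = k]: the derivative of the
    [a]-th coordinate in the direction of the [k]-th one. *)
Definition kron (k a : nat) : R := if Nat.eqb a k then 1 else 0.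

Lemma kron_ne k a : a <> k -> kron k a = 0.
Proof. intros H. unfold kron. destruct (Nat.eqb_spec a k); [lia | reflexivity]. Qed.

Lemma kron_shift p n i : kron (p + n) (i + n) = kron p i.
Proof. unfold kron. destruct (Nat.eqb_spec (i + n) (p + n)), (Nat.eqb_spec i p); lia || reflexivity. Qed.

Lemma rsum_kron_l N a g : (a < N)%nat -> rsum N (fun l => kron l a * g l) = g a.
Proof.
  induction N as [|N IH]; intros Ha; [lia |]. simpl. unfold kron at 2.
  destruct (Nat.eqb_spec a N) as [->|Hne].
  - rewrite rsum_zero; [ring |]. intros i Hi. rewrite kron_ne by lia. ring.
  - rewrite IH by lia. ring.
Qed.

Lemma rsum_kron_r N p g : rsum N (fun i => kron p i * g i) = if Nat.ltb p N then g p else 0.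
Proof.
  induction N as [|N IH]; simpl; auto. rewrite IH. unfold kron.
  destruct (Nat.eqb_spec N p), (Nat.ltb_spec p N), (Nat.ltb_spec p (S N)); try lia; subst; ring.
Qed.

(** Derivative rules for [derivable_pt_lim], stated for lambda-terms so that
    they apply directly to the expressions of [Vpot]. *)
Lemma dpl_ext (f g : R -> R) x l l' :
  (forall t, f t = g t) -> l = l' -> derivable_pt_lim g x l -> derivable_pt_lim f x l'.
Proof.
  intros Hfg <- Hd eps He. destruct (Hd eps He) as [d Hd'].
  exists d; intros h Hh Hh'. rewrite !Hfg; auto.
Qed.

Lemma dpl_const a x : derivable_pt_lim (fun _ => a) x 0.
Proof. apply derivable_pt_lim_const. Qed.

Lemma dpl_plus f g x a b : derivable_pt_lim f x a -> derivable_pt_lim g x b ->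
  derivable_pt_lim (fun t => f t + g t) x (a + b).
Proof. intros; apply dpl_ext with (g := (f + g)%F) (l := a + b); auto. apply derivable_pt_lim_plus; auto. Qed.

Lemma dpl_minus f g x a b : derivable_pt_lim f x a -> derivable_pt_lim g x b ->
  derivable_pt_lim (fun t => f t - g t) x (a - b).
Proof. intros; apply dpl_ext with (g := (f - g)%F) (l := a - b); auto. apply derivable_pt_lim_minus; auto. Qed.

Lemma dpl_mult f g x a b : derivable_pt_lim f x a -> derivable_pt_lim g x b ->
  derivable_pt_lim (fun t => f t * g t) x (a * g x + f x * b).
Proof. intros; eapply dpl_ext with (g := (f * g)%F); auto. apply derivable_pt_lim_mult; auto. Qed.

Lemma dpl_div f g x a b : derivable_pt_lim f x a -> derivable_pt_lim g x b -> g x <> 0 ->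
  derivable_pt_lim (fun t => f t / g t) x ((a * g x - b * f x) / (g x)²).
Proof. intros; eapply dpl_ext with (g := (f / g)%F); auto. apply derivable_pt_lim_div; auto. Qed.

Lemma dpl_pow (X : R -> R) x dX k : derivable_pt_lim X x dX ->
  derivable_pt_lim (fun t => X t ^ k) x (INR k * X x ^ pred k * dX).
Proof.
  intros HX. apply dpl_ext with (g := comp (fun y => y ^ k) X) (l := INR k * X x ^ pred k * dX); auto.
  eapply dpl_ext; [reflexivity | | apply derivable_pt_lim_comp; [exact HX | apply derivable_pt_lim_pow]].
  ring.
Qed.

Lemma dpl_sqrt (g : R -> R) x dg : derivable_pt_lim g x dg -> 0 < g x ->
  derivable_pt_lim (fun t => sqrt (g t)) x (dg / (2 * sqrt (g x))).
Proof.
  intros Hg Hp. eapply dpl_ext with (g := comp sqrt g);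
    [reflexivity | | apply derivable_pt_lim_comp; [exact Hg | apply derivable_pt_lim_sqrt; auto]].
  unfold Rdiv. ring.
Qed.

Lemma dpl_sum N (f : nat -> R -> R) df x :
  (forall i, (i < N)%nat -> derivable_pt_lim (f i) x (df i)) ->
  derivable_pt_lim (fun t => rsum N (fun i => f i t)) x (rsum N df).
Proof. induction N as [|N IH]; simpl; intros Hf; [apply dpl_const | apply dpl_plus; auto]. Qed.

Lemma dpl_local f g x l d : 0 < d -> (forall t, Rabs (t - x) < d -> f t = g t) ->
  derivable_pt_lim g x l -> derivable_pt_lim f x l.
Proof.
  intros Hd Hfg Hg eps He. destruct (Hg eps He) as [[d' Hd'] Hlim].
  assert (Hm : 0 < Rmin d d') by (apply Rmin_pos; auto).
  exists (mkposreal _ Hm). intros h Hh Hh'. simpl in Hh'.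
  assert (Hh1 : Rabs h < d) by (eapply Rlt_le_trans; [exact Hh' | apply Rmin_l]).
  rewrite (Hfg (x + h)), (Hfg x).
  - apply Hlim; auto. simpl. eapply Rlt_le_trans; [exact Hh' | apply Rmin_r].
  - replace (x - x) with 0 by ring. rewrite Rabs_R0. auto.
  - replace (x + h - x) with h by ring. auto.
Qed.

Lemma dpl_coord (q : nat -> R) k a x :
  derivable_pt_lim (fun t => upd q k t a) x (kron k a).
Proof.
  unfold upd, kron. destruct (Nat.eqb a k).
  - apply dpl_ext with (g := id) (l := 1); auto. apply derivable_pt_lim_id.
  - apply dpl_const.
Qed.

Lemma upd_same q k a : upd q k (q k) a = q a.
Proof. unfold upd. destruct (Nat.eqb_spec a k) as [->|]; auto. Qed.

Lemma sum_sq_pos a b : a ^ 2 + b ^ 2 <> 0 -> 0 < a ^ 2 + b ^ 2.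
Proof. intros H. destruct (Rle_lt_or_eq_dec 0 (a ^ 2 + b ^ 2)); [nra | auto | congruence]. Qed.

Lemma dpl_inv_norm (X Y : R -> R) x dX dY K :
  derivable_pt_lim X x dX -> derivable_pt_lim Y x dY -> X x ^ 2 + Y x ^ 2 <> 0 ->
  derivable_pt_lim (fun t => K / sqrt (X t ^ 2 + Y t ^ 2)) x
    (- K * (X x * dX + Y x * dY) / sqrt (X x ^ 2 + Y x ^ 2) ^ 3).
Proof.
  intros HX HY Hn.
  assert (Hp := sum_sq_pos _ _ Hn).
  assert (Hr : 0 < sqrt (X x ^ 2 + Y x ^ 2)) by (apply sqrt_lt_R0; auto).
  eapply dpl_ext; [reflexivity | |
    apply dpl_div; [apply dpl_const | apply dpl_sqrt; [apply dpl_plus; apply dpl_pow; eauto | auto] | cbv beta; lra]].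
  cbv beta. replace (INR 2) with 2 by (simpl; ring). simpl pred. unfold Rsqr. field. lra.
Qed.

Lemma dpl_pair_force (X Y : R -> R) x dX dY K p q :
  derivable_pt_lim X x dX -> derivable_pt_lim Y x dY -> X x ^ 2 + Y x ^ 2 <> 0 ->
  derivable_pt_lim (fun t => K * (X t * p + Y t * q) / sqrt (X t ^ 2 + Y t ^ 2) ^ 3) x
    (K * ((dX * p + dY * q) / sqrt (X x ^ 2 + Y x ^ 2) ^ 3
          - 3 * (X x * p + Y x * q) * (X x * dX + Y x * dY) / sqrt (X x ^ 2 + Y x ^ 2) ^ 5)).
Proof.
  intros HX HY Hn.
  assert (Hp := sum_sq_pos _ _ Hn).
  assert (Hr : 0 < sqrt (X x ^ 2 + Y x ^ 2)) by (apply sqrt_lt_R0; auto).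
  assert (Hs : sqrt (X x ^ 2 + Y x ^ 2) ^ 2 = X x ^ 2 + Y x ^ 2) by (apply pow2_sqrt; lra).
  eapply dpl_ext; [reflexivity | |
    apply dpl_div;
    [ apply dpl_mult; [apply dpl_const | apply dpl_plus; apply dpl_mult; eauto; apply dpl_const]
    | apply dpl_pow, dpl_sqrt; [apply dpl_plus; apply dpl_pow; eauto | auto]
    | apply pow_nonzero; lra ]].
  cbv beta. replace (INR 2) with 2 by (simpl; ring). replace (INR 3) with 3 by (simpl; ring).
  simpl pred. unfold Rsqr.
  remember (sqrt (X x ^ 2 + Y x ^ 2)) as r eqn:Er. clear Er.
  replace (X x ^ 2 + Y x ^ 2) with (r ^ 2) by (rewrite Hs; ring).
  field. lra.
Qed.

Definition rel_dot (n : nat) (q x : nat -> R) (i j : nat) : R :=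
  (q i - q j) * (x i - x j) + (q (i + n)%nat - q (j + n)%nat) * (x (i + n)%nat - x (j + n)%nat).

Lemma rel_dot_sym n q x i j : rel_dot n q x i j = rel_dot n x q i j.
Proof. unfold rel_dot. ring. Qed.

Definition grad (n : nat) (m : R) (k : nat) (q : nat -> R) : R :=
  rsum n (fun j => rsum j (fun i => - (m * m) * rel_dot n q (kron k) i j / dist2 n q i j ^ 3)).

Definition hess (n : nat) (m : R) (c : nat -> R) (k l : nat) : R :=
  rsum n (fun j => rsum j (fun i => - (m * m) *
    (rel_dot n (kron l) (kron k) i j / dist2 n c i j ^ 3
     - 3 * rel_dot n c (kron k) i j * rel_dot n c (kron l) i j / dist2 n c i j ^ 5))).

Lemma grad_is_partial n m q k : collision_free n q -> is_partial (Vpot n m) q k (grad n m k q).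
Proof.
  intros Hc. unfold is_partial, Vpot, grad.
  apply dpl_sum; intros j Hj. apply dpl_sum; intros i Hi. unfold dist2.
  eapply dpl_ext; [reflexivity | |
    apply dpl_inv_norm with (X := fun t => upd q k t i - upd q k t j)
                            (Y := fun t => upd q k t (i + n)%nat - upd q k t (j + n)%nat);
    try (apply dpl_minus; apply dpl_coord); rewrite !upd_same; apply Hc; lia].
  rewrite !upd_same. unfold rel_dot. ring.
Qed.

Lemma grad_deriv n m c k l : collision_free n c ->
  derivable_pt_lim (fun t => grad n m k (upd c l t)) (c l) (hess n m c k l).
Proof.
  intros Hc. unfold grad, hess.
  apply dpl_sum; intros j Hj. apply dpl_sum; intros i Hi.
  assert (Hr : 0 < dist2 n c i j).
  { apply sqrt_lt_R0, sum_sq_pos, Hc; lia. }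
  unfold rel_dot, dist2 in *.
  eapply dpl_ext; [reflexivity | |
    apply dpl_pair_force with (X := fun t => upd c l t i - upd c l t j)
                              (Y := fun t => upd c l t (i + n)%nat - upd c l t (j + n)%nat);
    try (apply dpl_minus; apply dpl_coord); rewrite !upd_same; apply Hc; lia].
  rewrite !upd_same. field. lra.
Qed.

Lemma common_radius (N : nat) (P : nat -> R -> Prop) :
  (forall i d d', 0 < d' <= d -> P i d -> P i d') ->
  (forall i, (i < N)%nat -> exists d, 0 < d /\ P i d) ->
  exists d, 0 < d /\ forall i, (i < N)%nat -> P i d.
Proof.
  intros Hmono. induction N as [|N IH]; intros HP.
  - exists 1; split; [lra | intros; lia].
  - destruct IH as [d1 [Hd1 H1]]; [intros; apply HP; lia |].
    destruct (HP N ltac:(lia)) as [d2 [Hd2 H2]].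
    assert (Hmin : 0 < Rmin d1 d2) by (apply Rmin_pos; auto).
    exists (Rmin d1 d2). split; auto. intros i Hi. destruct (Nat.eq_dec i N) as [->|].
    + eapply Hmono; [| apply H2]. split; [auto | apply Rmin_r].
    + eapply Hmono; [| apply H1; lia]. split; [auto | apply Rmin_l].
Qed.

Lemma sqdist_nonzero_near (c : nat -> R) l a b e f :
  (c a - c b) ^ 2 + (c e - c f) ^ 2 <> 0 ->
  exists d, 0 < d /\ forall t, Rabs (t - c l) < d ->
    (upd c l t a - upd c l t b) ^ 2 + (upd c l t e - upd c l t f) ^ 2 <> 0.
Proof.
  intros Hn.
  set (P := fun t => (upd c l t a - upd c l t b) ^ 2 + (upd c l t e - upd c l t f) ^ 2).
  assert (HP : continuity_pt P (c l)).
  { apply derivable_continuous_pt. eexists. unfold P.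
    apply dpl_plus; apply dpl_pow; apply dpl_minus; apply dpl_coord. }
  assert (Hv : P (c l) = (c a - c b) ^ 2 + (c e - c f) ^ 2) by (unfold P; rewrite !upd_same; auto).
  assert (Hpos : 0 < Rabs (P (c l))) by (apply Rabs_pos_lt; congruence).
  destruct (HP _ Hpos) as [d [Hd Hnear]].
  exists d. split; auto. intros t Ht.
  destruct (Req_dec t (c l)) as [->|Hne]; [rewrite <- Hv in Hn; exact Hn |].
  intro Hz. assert (H' := Hnear t (conj (conj I (not_eq_sym Hne)) Ht)).
  simpl in H'. unfold R_dist in H'. fold (P t) in Hz. rewrite Hz, Rminus_0_l, Rabs_Ropp in H'. lra.
Qed.

Lemma collision_free_near n (c : nat -> R) l : collision_free n c ->
  exists d, 0 < d /\ forall t, Rabs (t - c l) < d -> collision_free n (upd c l t).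
Proof.
  intros Hc.
  pose (ok := fun i j d => i <> j -> forall t, Rabs (t - c l) < d ->
     (upd c l t i - upd c l t j) ^ 2 + (upd c l t (i + n)%nat - upd c l t (j + n)%nat) ^ 2 <> 0).
  assert (Hmono : forall i j d d', 0 < d' <= d -> ok i j d -> ok i j d').
  { intros i j d d' Hdd Hok Hij t Ht. apply Hok; auto. lra. }
  destruct (common_radius n (fun i d => forall j, (j < n)%nat -> ok i j d)) as [d [Hd Hall]].
  - intros i d d' Hdd Hok j Hj. eapply Hmono; eauto.
  - intros i Hi.
    apply (common_radius n (fun j d => ok i j d)); [intros; eapply Hmono; eauto |].
    intros j Hj. destruct (Nat.eq_dec i j) as [->|Hij].
    + exists 1. split; [lra | intros Hjj; contradiction].
    + destruct (sqdist_nonzero_near c l i j (i + n)%nat (j + n)%nat) as [d [Hd Hnear]];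
        [apply Hc; auto |].
      exists d; split; [exact Hd | intros _; exact Hnear].
  - exists d. split; auto. intros t Ht i j Hi Hj Hij. apply (Hall i Hi j); auto.
Qed.

Lemma hessian_unique n m c (D : nat -> (nat -> R) -> R) k l h :
  collision_free n c ->
  (forall q, collision_free n q -> is_partial (Vpot n m) q k (D k q)) ->
  is_partial (D k) c l h -> h = hess n m c k l.
Proof.
  intros Hc HD Hh.
  destruct (collision_free_near n c l Hc) as [d [Hd Hnear]].
  apply (uniqueness_limite (fun t => D k (upd c l t)) (c l)); [exact Hh |].
  apply dpl_local with (g := fun t => grad n m k (upd c l t)) (d := d); auto; [| apply grad_deriv; auto].
  intros t Ht. eapply uniqueness_limite; [apply HD | apply grad_is_partial]; auto.
Qed.

(** Field at [d = (dx, dy)] of a pair interaction, and its variation in the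
    direction [D = (Dx, Dy)]: these are the gradient and Hessian entries of
    one term [1/|d|] of the potential. *)
Definition coulomb_x (dx dy : R) : R := dx / sqrt (dx ^ 2 + dy ^ 2) ^ 3.

Definition dipole_x (dx dy Dx Dy : R) : R :=
  Dx / sqrt (dx ^ 2 + dy ^ 2) ^ 3 - 3 * dx * (dx * Dx + dy * Dy) / sqrt (dx ^ 2 + dy ^ 2) ^ 5.

Definition dipole_y (dx dy Dx Dy : R) : R :=
  Dy / sqrt (dx ^ 2 + dy ^ 2) ^ 3 - 3 * dy * (dx * Dx + dy * Dy) / sqrt (dx ^ 2 + dy ^ 2) ^ 5.

Lemma sqrt_sum_sq_swap a b c d : sqrt ((b - a) ^ 2 + (d - c) ^ 2) = sqrt ((a - b) ^ 2 + (c - d) ^ 2).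
Proof. f_equal. ring. Qed.

Lemma coulomb_x_swap a b c d : coulomb_x (b - a) (d - c) = - coulomb_x (a - b) (c - d).
Proof. unfold coulomb_x. rewrite sqrt_sum_sq_swap. unfold Rdiv. ring. Qed.

Lemma dipole_x_swap a b c d e f g h :
  dipole_x (b - a) (d - c) (f - e) (h - g) = - dipole_x (a - b) (c - d) (e - f) (g - h).
Proof. unfold dipole_x. rewrite sqrt_sum_sq_swap. unfold Rdiv. ring. Qed.

Lemma dipole_y_swap a b c d e f g h :
  dipole_y (b - a) (d - c) (f - e) (h - g) = - dipole_y (a - b) (c - d) (e - f) (g - h).
Proof. unfold dipole_y. rewrite sqrt_sum_sq_swap. unfold Rdiv. ring. Qed.

Lemma rsum_rel_dot N n q x i j : (i + n < N)%nat -> (j + n < N)%nat ->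
  rsum N (fun l => rel_dot n q (kron l) i j * x l) = rel_dot n q x i j.
Proof.
  intros Hi Hj. unfold rel_dot.
  transitivity (rsum N (fun l => (q i - q j) * (kron l i * x l - kron l j * x l)
     + (q (i + n)%nat - q (j + n)%nat) * (kron l (i + n) * x l - kron l (j + n) * x l))).
  { apply rsum_ext; intros; ring. }
  rewrite rsum_plus, !rsum_scal, !rsum_minus, !rsum_kron_l by lia. reflexivity.
Qed.

(** Applying [hess] to a vector [x]: the delta families collapse and each pair
    contributes the variation of its field in the direction [x]. *)
Lemma hess_apply n m c k x :
  rsum (2 * n) (fun l => hess n m c k l * x l) =
  rsum n (fun j => rsum j (fun i => - (m * m) *
    (rel_dot n x (kron k) i j / dist2 n c i j ^ 3
     - 3 * rel_dot n c (kron k) i j * rel_dot n c x i j / dist2 n c i j ^ 5))).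
Proof.
  unfold hess.
  rewrite (rsum_ext _ _ (fun l => rsum n (fun j => rsum j (fun i => _ * x l))))
    by (intros l _; rewrite <- rsum_mulr; apply rsum_ext; intros j _; rewrite <- rsum_mulr; reflexivity).
  rewrite rsum_swap. apply rsum_ext; intros j Hj. rewrite rsum_swap. apply rsum_ext; intros i Hi.
  set (r := dist2 n c i j).
  transitivity (rsum (2 * n) (fun l => (- (m * m) / r ^ 3) * (rel_dot n (kron k) (kron l) i j * x l)
     - (- (m * m) * 3 * rel_dot n c (kron k) i j / r ^ 5) * (rel_dot n c (kron l) i j * x l))).
  { apply rsum_ext; intros l _. rewrite (rel_dot_sym n (kron l)). unfold Rdiv. ring. }
  rewrite rsum_minus, !rsum_scal, !rsum_rel_dot by lia.
  rewrite (rel_dot_sym n (kron k)). unfold Rdiv. ring.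
Qed.

(** For a horizontal coordinate [p] and a vertical one [p + n], only the
    pairs containing body [p] contribute. *)
Lemma rel_dot_kron_x n y p i j : (p < n)%nat ->
  rel_dot n y (kron p) i j = (kron p i - kron p j) * (y i - y j).
Proof. intros Hp. unfold rel_dot. rewrite !(kron_ne p (_ + n)) by lia. ring. Qed.

Lemma rel_dot_kron_y n y p i j : (i < n)%nat -> (j < n)%nat ->
  rel_dot n y (kron (p + n)) i j = (kron p i - kron p j) * (y (i + n)%nat - y (j + n)%nat).
Proof. intros Hi Hj. unfold rel_dot. rewrite !kron_shift, !(kron_ne (p + n)) by lia. ring. Qed.

Lemma grad_row n m q p : (p < n)%nat ->
  grad n m p q = rsum n (fun j => rsum j (fun i => (kron p i - kron p j) *
    (- (m * m) * coulomb_x (q i - q j) (q (i + n)%nat - q (j + n)%nat)))).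
Proof.
  intros Hp. unfold grad. apply rsum_ext; intros j Hj. apply rsum_ext; intros i Hi.
  rewrite rel_dot_kron_x by auto. unfold coulomb_x, dist2, Rdiv. ring.
Qed.

Lemma hess_row_x n m c x p : (p < n)%nat ->
  rsum (2 * n) (fun l => hess n m c p l * x l) =
  rsum n (fun j => rsum j (fun i => (kron p i - kron p j) * (- (m * m) *
    dipole_x (c i - c j) (c (i + n)%nat - c (j + n)%nat) (x i - x j) (x (i + n)%nat - x (j + n)%nat)))).
Proof.
  intros Hp. rewrite hess_apply. apply rsum_ext; intros j Hj. apply rsum_ext; intros i Hi.
  rewrite !rel_dot_kron_x by auto. unfold dipole_x, rel_dot, dist2, Rdiv. ring.
Qed.

Lemma hess_row_y n m c x p :
  rsum (2 * n) (fun l => hess n m c (p + n) l * x l) =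
  rsum n (fun j => rsum j (fun i => (kron p i - kron p j) * (- (m * m) *
    dipole_y (c i - c j) (c (i + n)%nat - c (j + n)%nat) (x i - x j) (x (i + n)%nat - x (j + n)%nat)))).
Proof.
  rewrite hess_apply. apply rsum_ext; intros j Hj. apply rsum_ext; intros i Hi.
  rewrite !rel_dot_kron_y by lia. unfold dipole_y, rel_dot, dist2, Rdiv. ring.
Qed.

(** Body [a] sits at angle [Ang n a]; bodies [p] and [p + e + 1] (mod [n])
    are separated by the angle [2 * half_gap n e]. *)
Definition Ang (n a : nat) : R := 2 * PI * INR a / INR n.
Definition half_gap (n e : nat) : R := PI * INR (S e) / INR n.

(** The vectors [w_b]: [w_b] at body [a] is the unit vector at angle [2 Ang a + b].
    [v = w_0] and [J v = w_(PI/2)]. *)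
Definition wvec (n : nat) (b : R) (a : nat) : R :=
  if Nat.ltb a n then cos (2 * Ang n a + b) else sin (2 * Ang n (a - n) + b).

Lemma ngon_x n al a : (a < n)%nat -> ngon n al a = al * cos (Ang n a).
Proof. intros H. unfold ngon, Ang. rewrite (proj2 (Nat.ltb_lt _ _) H). reflexivity. Qed.

Lemma ngon_y n al a : ngon n al (a + n) = al * sin (Ang n a).
Proof. unfold ngon, Ang. destruct (Nat.ltb_spec (a + n) n); [lia |]. rewrite Nat.add_sub. reflexivity. Qed.

Lemma wvec_x n b a : (a < n)%nat -> wvec n b a = cos (2 * Ang n a + b).
Proof. intros H. unfold wvec. rewrite (proj2 (Nat.ltb_lt _ _) H). reflexivity. Qed.

Lemma wvec_y n b a : wvec n b (a + n) = sin (2 * Ang n a + b).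
Proof. unfold wvec. destruct (Nat.ltb_spec (a + n) n); [lia |]. rewrite Nat.add_sub. reflexivity. Qed.

Lemma Ang_0 n : Ang n 0 = 0.
Proof. unfold Ang. simpl INR. unfold Rdiv. ring. Qed.

Lemma half_gap_range n e : (e < n - 1)%nat -> 0 < half_gap n e < PI.
Proof.
  intros H. unfold half_gap.
  assert (Hn : 0 < INR n) by (apply lt_0_INR; lia).
  assert (Hs : INR (S e) < INR n) by (apply lt_INR; lia).
  assert (Hs0 : 0 < INR (S e)) by (apply lt_0_INR; lia).
  assert (HPI := PI_RGT_0).
  split.
  - apply Rdiv_lt_0_compat; auto. apply Rmult_lt_0_compat; auto.
  - apply Rmult_lt_reg_r with (INR n); auto. unfold Rdiv. rewrite Rmult_assoc, Rinv_l by lra.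
    rewrite Rmult_1_r. apply Rmult_lt_compat_l; auto.
Qed.

Lemma sin_half_gap_pos n e : (e < n - 1)%nat -> 0 < sin (half_gap n e).
Proof. intros H. apply sin_gt_0; apply half_gap_range; auto. Qed.

Lemma pairs_through n p X : (p < n)%nat ->
  (forall i j, (i < n)%nat -> (j < n)%nat -> X j i = - X i j) ->
  rsum n (fun j => rsum j (fun i => (kron p i - kron p j) * X i j))
  = rsum (n - 1 - p) (fun e => X p (p + 1 + e)%nat) + rsum p (fun i => X p i).
Proof.
  intros Hp Ha.
  rewrite (rsum_ext _ _ (fun j => rsum j (fun i => kron p i * X i j) - kron p j * rsum j (fun i => X i j)))
    by (intros j _; rewrite <- rsum_scal, <- rsum_minus; apply rsum_ext; intros; ring).
  rewrite rsum_minus, (rsum_kron_r n p (fun j => rsum j (fun i => X i j))), (proj2 (Nat.ltb_lt _ _) Hp).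
  rewrite (rsum_ext n _ (fun j => if Nat.ltb p j then X p j else 0))
    by (intros j _; exact (rsum_kron_r j p (fun i => X i j))).
  replace n with ((p + 1) + (n - 1 - p))%nat at 1 by lia.
  rewrite rsum_split, rsum_zero, Rplus_0_l.
  - unfold Rminus. rewrite <- rsum_opp. f_equal.
    + apply rsum_ext; intros e _. destruct (Nat.ltb_spec p (p + 1 + e)); [reflexivity | lia].
    + apply rsum_ext; intros i Hi. rewrite Ha by lia. ring.
  - intros i Hi. destruct (Nat.ltb_spec p i); [lia | reflexivity].
Qed.

Lemma polygon_row n p X (F : R -> R) : (p < n)%nat ->
  (forall i j, (i < n)%nat -> (j < n)%nat -> X j i = - X i j) ->
  (forall j, (j < n)%nat -> X p j = F (Ang n j)) ->
  (forall y, F (y + 2 * PI) = F y) ->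
  rsum n (fun j => rsum j (fun i => (kron p i - kron p j) * X i j))
  = rsum (n - 1) (fun e => F (Ang n p + 2 * half_gap n e)).
Proof.
  intros Hp Ha HX HF.
  assert (Hn : INR n <> 0) by (apply not_0_INR; lia).
  rewrite pairs_through by auto.
  assert (Hsplit : forall f, rsum (n - 1) f = rsum (n - 1 - p) f + rsum p (fun e => f (n - 1 - p + e)%nat))
    by (intros f; rewrite <- rsum_split; f_equal; lia).
  rewrite Hsplit. f_equal.
  - apply rsum_ext; intros e He. rewrite HX by lia. f_equal.
    unfold Ang, half_gap. rewrite !plus_INR, !S_INR. simpl INR. field. auto.
  - apply rsum_ext; intros e He. rewrite HX by lia. rewrite <- HF. f_equal.
    unfold Ang, half_gap.
    replace (INR (S (n - 1 - p + e))) with (INR n - INR p + INR e)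
      by (replace (S (n - 1 - p + e)) with ((n + e) - p)%nat by lia;
          rewrite minus_INR, plus_INR by lia; ring).
    field. auto.
Qed.

Lemma chord psi s :
  cos (psi - s) - cos (psi + s) = 2 * sin s * sin psi /\
  sin (psi - s) - sin (psi + s) = - (2 * sin s * cos psi).
Proof. rewrite cos_minus, cos_plus, sin_minus, sin_plus. split; ring. Qed.

Lemma polar_sq rho psi : (rho * sin psi) ^ 2 + (- (rho * cos psi)) ^ 2 = rho ^ 2.
Proof. rewrite <- (Rmult_1_r (rho ^ 2)), <- (sin2_cos2 psi). unfold Rsqr. ring. Qed.

Lemma polar_norm rho psi : 0 < rho ->
  sqrt ((rho * sin psi) ^ 2 + (- (rho * cos psi)) ^ 2) = rho.
Proof. intros Hr. rewrite polar_sq. apply sqrt_pow2. lra. Qed.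

(** Pair field and dipole variation when the separation [d] has length [rho]
    and direction [psi - PI/2], and the variation [D] has length [K] and
    direction [chi - PI/2]. *)
Lemma coulomb_polar rho psi : 0 < rho ->
  coulomb_x (rho * sin psi) (- (rho * cos psi)) = sin psi / rho ^ 2.
Proof. intros Hr. unfold coulomb_x. rewrite polar_norm by auto. field. lra. Qed.

Lemma dipole_polar rho K psi chi : 0 < rho ->
  dipole_x (rho * sin psi) (- (rho * cos psi)) (K * sin chi) (- (K * cos chi))
    = - K * (sin chi + 3 * sin (2 * psi - chi)) / (2 * rho ^ 3) /\
  dipole_y (rho * sin psi) (- (rho * cos psi)) (K * sin chi) (- (K * cos chi))
    = K * (cos chi + 3 * cos (2 * psi - chi)) / (2 * rho ^ 3).
Proof.
  intros Hr. unfold dipole_x, dipole_y. rewrite polar_norm by auto.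
  rewrite sin_minus, cos_minus, sin_2a. split.
  - rewrite cos_2a_sin. field. lra.
  - rewrite cos_2a_cos. field. lra.
Qed.

Definition polygon_coulomb (al th ps : R) : R :=
  coulomb_x (al * cos th - al * cos ps) (al * sin th - al * sin ps).

Definition polygon_dipole_x (al b th ps : R) : R :=
  dipole_x (al * cos th - al * cos ps) (al * sin th - al * sin ps)
           (cos (2 * th + b) - cos (2 * ps + b)) (sin (2 * th + b) - sin (2 * ps + b)).

Definition polygon_dipole_y (al b th ps : R) : R :=
  dipole_y (al * cos th - al * cos ps) (al * sin th - al * sin ps)
           (cos (2 * th + b) - cos (2 * ps + b)) (sin (2 * th + b) - sin (2 * ps + b)).

Lemma cos_sin_period x : cos (x + 2 * PI) = cos x /\ sin (x + 2 * PI) = sin x.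
Proof.
  replace (x + 2 * PI) with (x + 2 * INR 1 * PI) by (simpl; ring).
  split; [apply cos_period | apply sin_period].
Qed.

Lemma polygon_periodic al b th ps :
  polygon_coulomb al th (ps + 2 * PI) = polygon_coulomb al th ps /\
  polygon_dipole_x al b th (ps + 2 * PI) = polygon_dipole_x al b th ps /\
  polygon_dipole_y al b th (ps + 2 * PI) = polygon_dipole_y al b th ps.
Proof.
  unfold polygon_coulomb, polygon_dipole_x, polygon_dipole_y.
  replace (2 * (ps + 2 * PI) + b) with ((2 * ps + b) + 2 * PI + 2 * PI) by ring.
  destruct (cos_sin_period ps) as [-> ->].
  destruct (cos_sin_period (2 * ps + b + 2 * PI)) as [-> ->].
  destruct (cos_sin_period (2 * ps + b)) as [-> ->]. auto.
Qed.

(** Two bodies of the circle of radius [al] separated by the angle [2 t]: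
    their separation has length [2 al sin t] and direction [th + t - PI/2]. *)
Lemma polygon_separation al th t :
  al * cos th - al * cos (th + 2 * t) = (2 * al * sin t) * sin (th + t) /\
  al * sin th - al * sin (th + 2 * t) = - ((2 * al * sin t) * cos (th + t)).
Proof.
  destruct (chord (th + t) t) as [Ec Es].
  replace (th + t - t) with th in Ec, Es by ring. replace (th + t + t) with (th + 2 * t) in Ec, Es by ring.
  split; nra.
Qed.

Lemma polygon_coulomb_value al th t : 0 < al -> 0 < sin t ->
  polygon_coulomb al th (th + 2 * t) = sin (th + t) / (2 * al * sin t) ^ 2.
Proof.
  intros Ha Hs. unfold polygon_coulomb.
  destruct (polygon_separation al th t) as [-> ->]. apply coulomb_polar. nra.
Qed.

Lemma polygon_dipole_value al b th t : 0 < al -> 0 < sin t ->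
  polygon_dipole_x al b th (th + 2 * t)
    = - cos t * (sin (2 * th + b + 2 * t) - 3 * sin b) / (4 * al ^ 3 * sin t ^ 2) /\
  polygon_dipole_y al b th (th + 2 * t)
    = cos t * (cos (2 * th + b + 2 * t) + 3 * cos b) / (4 * al ^ 3 * sin t ^ 2).
Proof.
  intros Ha Hs. unfold polygon_dipole_x, polygon_dipole_y.
  destruct (polygon_separation al th t) as [-> ->].
  destruct (chord (2 * th + b + 2 * t) (2 * t)) as [Ec Es].
  replace (2 * th + b + 2 * t - 2 * t) with (2 * th + b) in Ec, Es by ring.
  replace (2 * th + b + 2 * t + 2 * t) with (2 * (th + 2 * t) + b) in Ec, Es by ring.
  rewrite Ec, Es.
  destruct (dipole_polar (2 * al * sin t) (2 * sin (2 * t)) (th + t) (2 * th + b + 2 * t)) as [Ex Ey];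
    [nra |].
  replace (2 * (th + t) - (2 * th + b + 2 * t)) with (- b) in Ex, Ey by ring.
  rewrite sin_neg in Ex. rewrite cos_neg in Ey. rewrite Ex, Ey, sin_2a.
  split; field; lra.
Qed.

Definition inv_sin_sum (n : nat) : R := rsum (n - 1) (fun e => / sin (half_gap n e)).
Definition sin_sum (n : nat) : R := rsum (n - 1) (fun e => sin (half_gap n e)).

Lemma inv_sin_sum_pos n : (2 <= n)%nat -> 0 < inv_sin_sum n.
Proof.
  intros Hn. apply rsum_pos; [lia |]. intros e He.
  apply Rinv_0_lt_compat, sin_half_gap_pos; auto.
Qed.

(** The gaps are symmetric under [t |-> PI - t], so odd functions sum to zero. *)
Lemma odd_gap_sum n (g : R -> R) : (1 <= n)%nat ->
  (forall x, g (PI - x) = - g x) -> rsum (n - 1) (fun e => g (half_gap n e)) = 0.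
Proof.
  intros Hn Hg.
  assert (HnR : INR n <> 0) by (apply not_0_INR; lia).
  enough (E : rsum (n - 1) (fun e => g (half_gap n e)) = - rsum (n - 1) (fun e => g (half_gap n e)))
    by lra.
  rewrite rsum_rev at 1. rewrite <- rsum_opp. apply rsum_ext; intros e He.
  replace (half_gap n (n - 1 - 1 - e)) with (PI - half_gap n e); [apply Hg |].
  unfold half_gap. replace (INR (S (n - 1 - 1 - e))) with (INR n - INR (S e))
    by (rewrite <- minus_INR by lia; f_equal; lia).
  field. auto.
Qed.

Lemma gap_sum n A B C : (2 <= n)%nat ->
  rsum (n - 1) (fun e => cos (half_gap n e) *
    (A * cos (2 * half_gap n e) + B * sin (2 * half_gap n e) + C) / sin (half_gap n e) ^ 2)
  = 2 * B * (inv_sin_sum n - sin_sum n).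
Proof.
  intros Hn.
  set (g := fun x => cos x * (A * cos (2 * x) + C) / sin x ^ 2).
  rewrite (rsum_ext _ _ (fun e => g (half_gap n e)
       + 2 * B * (/ sin (half_gap n e) - sin (half_gap n e)))).
  - rewrite rsum_plus, odd_gap_sum, rsum_scal, rsum_minus by (try lia; intros x; unfold g;
      rewrite Rtrigo_facts.cos_pi_minus, sin_PI_x, !cos_2a_sin, sin_PI_x; unfold Rdiv; ring).
    unfold inv_sin_sum, sin_sum. ring.
  - intros e He. assert (Hs := sin_half_gap_pos n e He). unfold g.
    set (t := half_gap n e) in *. rewrite sin_2a.
    assert (Hc : cos t ^ 2 = 1 - sin t ^ 2) by (rewrite <- (sin2_cos2 t); unfold Rsqr; ring).
    transitivity (cos t * (A * cos (2 * t) + C) / sin t ^ 2 + 2 * B * cos t ^ 2 / sin t);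
      [field | rewrite Hc; field]; lra.
Qed.

Lemma sin_sum_telescope N x : 2 * sin (x / 2) * rsum N (fun e => sin (INR (S e) * x))
  = cos (x / 2) - cos ((INR N + 1 / 2) * x).
Proof.
  induction N as [|N IH].
  - simpl. replace ((0 + 1 / 2) * x) with (x / 2) by field. ring.
  - change (rsum (S N) ?f) with (rsum N f + f N). cbv beta.
    rewrite Rmult_plus_distr_l, IH, !S_INR.
    assert (Hprod : forall a b, 2 * sin a * sin b = cos (b - a) - cos (b + a))
      by (intros a b; rewrite cos_minus, cos_plus; ring).
    rewrite Hprod.
    replace ((INR N + 1) * x - x / 2) with ((INR N + 1 / 2) * x) by field.
    replace ((INR N + 1) * x + x / 2) with ((INR N + 1 + 1 / 2) * x) by field.
    ring.
Qed.

(** Closed form of [sum sin t] from the telescoping identity with [x = PI/n]. *)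
Lemma sin_sum_value n : (2 <= n)%nat ->
  sin_sum n = sin (PI / INR n) / (1 - cos (PI / INR n)).
Proof.
  intros Hn. unfold sin_sum.
  assert (HnR : 1 < INR n) by (apply lt_1_INR; lia).
  assert (HPI := PI_RGT_0).
  set (x := PI / INR n).
  assert (Hx : 0 < x / 2 < PI).
  { unfold x. split; [apply Rdiv_lt_0_compat; [apply Rdiv_lt_0_compat |]; lra |].
    assert (PI / INR n <= PI)
      by (apply Rmult_le_reg_r with (INR n); [lra |]; unfold Rdiv; rewrite Rmult_assoc, Rinv_l; nra).
    lra. }
  assert (Hs : 0 < sin (x / 2)) by (apply sin_gt_0; lra).
  assert (Ht := sin_sum_telescope (n - 1) x).
  rewrite (rsum_ext _ _ (fun e => sin (half_gap n e))) in Ht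
    by (intros e _; unfold half_gap, x; f_equal; field; lra).
  replace ((INR (n - 1) + 1 / 2) * x) with (PI - x / 2) in Ht
    by (rewrite minus_INR by lia; unfold x; simpl INR; field; lra).
  rewrite Rtrigo_facts.cos_pi_minus in Ht.
  replace x with (2 * (x / 2)) by field. rewrite sin_2a, cos_2a_sin.
  apply Rmult_eq_reg_l with (2 * sin (x / 2)); [| lra].
  rewrite Ht. field. nra.
Qed.

Lemma lambda14_gap_sums n : (2 <= n)%nat -> lambda14 n = 2 - 2 * sin_sum n / inv_sin_sum n.
Proof.
  intros Hn. unfold lambda14. rewrite sin_sum_value by auto.
  unfold inv_sin_sum, half_gap, Rdiv. ring.
Qed.

Lemma Ang_gap n i j : (1 <= n)%nat -> (i < j)%nat ->
  Ang n j = Ang n i + 2 * half_gap n (j - i - 1).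
Proof.
  intros Hn Hij. assert (INR n <> 0) by (apply not_0_INR; lia).
  unfold Ang, half_gap. replace (S (j - i - 1)) with (j - i)%nat by lia.
  rewrite minus_INR by lia. field. auto.
Qed.

(** The polygon is collision-free: distinct vertices are at distance [2 al sin t > 0]. *)
Lemma ngon_collision_free n al : (2 <= n)%nat -> 0 < al -> collision_free n (ngon n al).
Proof.
  intros Hn Ha.
  assert (Hlt : forall i j, (i < j)%nat -> (j < n)%nat ->
    (ngon n al i - ngon n al j) ^ 2 + (ngon n al (i + n) - ngon n al (j + n)) ^ 2 <> 0).
  { intros i j Hij Hj. rewrite !ngon_x, !ngon_y by lia. rewrite (Ang_gap n i j) by lia.
    assert (Hs := sin_half_gap_pos n (j - i - 1) ltac:(lia)).
    destruct (polygon_separation al (Ang n i) (half_gap n (j - i - 1))) as [-> ->].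
    rewrite polar_sq. apply pow_nonzero. nra. }
  intros i j Hi Hj Hij. destruct (Nat.lt_gt_cases i j) as [[Hl | Hl] _]; [lia | auto |].
  replace ((ngon n al i - ngon n al j) ^ 2 + (ngon n al (i + n) - ngon n al (j + n)) ^ 2)
    with ((ngon n al j - ngon n al i) ^ 2 + (ngon n al (j + n) - ngon n al (i + n)) ^ 2) by ring.
  auto.
Qed.

Lemma polygon_grad n m al : (2 <= n)%nat -> 0 < al ->
  grad n m 0 (ngon n al) = - (m * m) / (4 * al ^ 2) * inv_sin_sum n.
Proof.
  intros Hn Ha. rewrite grad_row by lia.
  rewrite (polygon_row n 0 _ (fun ps => - (m * m) * polygon_coulomb al (Ang n 0) ps)); swap 1 5.
  { intros y. destruct (polygon_periodic al 0 (Ang n 0) y) as [-> _]. reflexivity. }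
  { lia. }
  { intros i j _ _. rewrite coulomb_x_swap. ring. }
  { intros j Hj. unfold polygon_coulomb. rewrite !ngon_x, !ngon_y by lia. reflexivity. }
  unfold inv_sin_sum. rewrite <- rsum_scal. apply rsum_ext; intros e He.
  assert (Hs := sin_half_gap_pos n e He).
  rewrite polygon_coulomb_value, Ang_0, Rplus_0_l by auto. field. lra.
Qed.

Lemma darboux_radius n m al : (2 <= n)%nat -> 0 < m -> 0 < al ->
  is_partial (Vpot n m) (ngon n al) 0 (- (m * ngon n al 0)) ->
  m * inv_sin_sum n = 4 * al ^ 3.
Proof.
  intros Hn Hm Ha Hdar.
  assert (Hg : grad n m 0 (ngon n al) = - (m * ngon n al 0))
    by (eapply uniqueness_limite; [apply grad_is_partial, ngon_collision_free | exact Hdar]; auto).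
  rewrite polygon_grad, ngon_x, Ang_0, cos_0 in Hg by (auto; lia).
  apply Rmult_eq_reg_l with (m / (4 * al ^ 2)); [| apply Rgt_not_eq, Rdiv_lt_0_compat; nra].
  transitivity (- (- (m * m) / (4 * al ^ 2) * inv_sin_sum n)); [field; lra |].
  rewrite Hg. field. lra.
Qed.

Lemma polygon_hess_x n m al b p : (2 <= n)%nat -> 0 < al -> (p < n)%nat ->
  rsum (2 * n) (fun l => hess n m (ngon n al) p l * wvec n b l)
  = m * m / (2 * al ^ 3) * (inv_sin_sum n - sin_sum n) * wvec n b p.
Proof.
  intros Hn Ha Hp. rewrite hess_row_x by auto.
  rewrite (polygon_row n p _ (fun ps => - (m * m) * polygon_dipole_x al b (Ang n p) ps)); swap 1 5.
  { intros y. destruct (polygon_periodic al b (Ang n p) y) as [_ [-> _]]. reflexivity. }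
  { exact Hp. }
  { intros i j _ _. rewrite dipole_x_swap. ring. }
  { intros j Hj. unfold polygon_dipole_x. rewrite !ngon_x, !ngon_y, !wvec_x, !wvec_y by lia. reflexivity. }
  rewrite (rsum_ext _ _ (fun e => m * m / (4 * al ^ 3) * (cos (half_gap n e) *
      (sin (2 * Ang n p + b) * cos (2 * half_gap n e) + cos (2 * Ang n p + b) * sin (2 * half_gap n e)
       + - 3 * sin b) / sin (half_gap n e) ^ 2))).
  - rewrite rsum_scal, gap_sum, wvec_x by auto. field. lra.
  - intros e He. assert (Hs := sin_half_gap_pos n e He).
    destruct (polygon_dipole_value al b (Ang n p) (half_gap n e)) as [-> _]; auto.
    rewrite sin_plus. field. lra.
Qed.

Lemma polygon_hess_y n m al b p : (2 <= n)%nat -> 0 < al -> (p < n)%nat ->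
  rsum (2 * n) (fun l => hess n m (ngon n al) (p + n) l * wvec n b l)
  = m * m / (2 * al ^ 3) * (inv_sin_sum n - sin_sum n) * wvec n b (p + n).
Proof.
  intros Hn Ha Hp. rewrite hess_row_y.
  rewrite (polygon_row n p _ (fun ps => - (m * m) * polygon_dipole_y al b (Ang n p) ps)); swap 1 5.
  { intros y. destruct (polygon_periodic al b (Ang n p) y) as [_ [_ ->]]. reflexivity. }
  { exact Hp. }
  { intros i j _ _. rewrite dipole_y_swap. ring. }
  { intros j Hj. unfold polygon_dipole_y. rewrite !ngon_x, !ngon_y, !wvec_x, !wvec_y by lia. reflexivity. }
  rewrite (rsum_ext _ _ (fun e => - (m * m) / (4 * al ^ 3) * (cos (half_gap n e) *
      (cos (2 * Ang n p + b) * cos (2 * half_gap n e) + - sin (2 * Ang n p + b) * sin (2 * half_gap n e)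
       + 3 * cos b) / sin (half_gap n e) ^ 2))).
  - rewrite rsum_scal, gap_sum, wvec_y by auto. field. lra.
  - intros e He. assert (Hs := sin_half_gap_pos n e He).
    destruct (polygon_dipole_value al b (Ang n p) (half_gap n e)) as [_ ->]; auto.
    rewrite cos_plus. field. lra.
Qed.

Lemma polygon_hess_eigen n m al b k : (2 <= n)%nat -> 0 < m -> 0 < al -> (k < 2 * n)%nat ->
  m * inv_sin_sum n = 4 * al ^ 3 ->
  rsum (2 * n) (fun l => hess n m (ngon n al) k l * wvec n b l) = m * lambda14 n * wvec n b k.
Proof.
  intros Hn Hm Ha Hk Hrad.
  assert (HS := inv_sin_sum_pos n Hn).
  assert (Hcoef : m * m / (2 * al ^ 3) * (inv_sin_sum n - sin_sum n) = m * lambda14 n).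
  { rewrite lambda14_gap_sums by auto. replace (al ^ 3) with (m * inv_sin_sum n / 4) by lra.
    field. lra. }
  destruct (Nat.lt_ge_cases k n) as [Hkn | Hkn].
  - rewrite polygon_hess_x, Hcoef by auto. reflexivity.
  - replace k with ((k - n) + n)%nat by lia.
    rewrite polygon_hess_y, Hcoef by (auto; lia). reflexivity.
Qed.

Lemma vvec_wvec n l : (1 <= n)%nat -> vvec n l = wvec n 0 l.
Proof.
  intros Hn. assert (INR n <> 0) by (apply not_0_INR; lia).
  unfold vvec, wvec, Ang. destruct (Nat.ltb l n); f_equal; field; auto.
Qed.

Lemma Jmul_vvec n l : (1 <= n)%nat -> (l < 2 * n)%nat -> Jmul n (vvec n) l = wvec n (PI / 2) l.
Proof.
  intros Hn Hl. unfold Jmul. rewrite !vvec_wvec by auto.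
  destruct (Nat.ltb_spec l n).
  - rewrite wvec_y, wvec_x, Rplus_0_r by auto. rewrite cos_plus, cos_PI2, sin_PI2. ring.
  - replace l with ((l - n) + n)%nat at 2 by lia.
    rewrite wvec_y, wvec_x, Rplus_0_r by lia. rewrite sin_plus, cos_PI2, sin_PI2. ring.
Qed.

Lemma Jinvmul_wvec n k : (1 <= n)%nat -> (k < 2 * n)%nat -> Jinvmul n (wvec n (PI / 2)) k = vvec n k.
Proof.
  intros Hn Hk. unfold Jinvmul. rewrite vvec_wvec by auto.
  destruct (Nat.ltb_spec k n).
  - rewrite wvec_y, !wvec_x, Rplus_0_r by auto. rewrite sin_plus, cos_PI2, sin_PI2. ring.
  - replace k with ((k - n) + n)%nat at 2 by lia.
    rewrite wvec_y, wvec_x, Rplus_0_r by lia. rewrite cos_plus, cos_PI2, sin_PI2. ring.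
Qed.

Lemma mv_ext n A x y k : (forall l, (l < 2 * n)%nat -> x l = y l) -> mv n A x k = mv n A y k.
Proof. intros Hxy. unfold mv. apply rsum_ext. intros l Hl. rewrite Hxy; auto. Qed.

Lemma Jinvmul_ext n x y k : (k < 2 * n)%nat -> (forall l, (l < 2 * n)%nat -> x l = y l) ->
  Jinvmul n x k = Jinvmul n y k.
Proof. intros Hk Hxy. unfold Jinvmul. destruct (Nat.ltb_spec k n); rewrite Hxy; auto; lia. Qed.

Lemma Jinvmul_scal n a x k : Jinvmul n (fun l => a * x l) k = a * Jinvmul n x k.
Proof. unfold Jinvmul. destruct (Nat.ltb k n); ring. Qed.

Theorem theorem14 (n : nat) (m alpha : R)
  (D : nat -> (nat -> R) -> R) (H : nat -> nat -> R) :
  (2 <= n)%nat -> 0 < m -> 0 < alpha ->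
  (forall k, (k < 2 * n)%nat ->
     is_partial (Vpot n m) (ngon n alpha) k (- (m * ngon n alpha k))) ->
  (forall q k, collision_free n q -> (k < 2 * n)%nat ->
     is_partial (Vpot n m) q k (D k q)) ->
  (forall k l, (k < 2 * n)%nat -> (l < 2 * n)%nat ->
     is_partial (D k) (ngon n alpha) l (H k l)) ->
  let W := fun k l => H k l / m in
  forall k, (k < 2 * n)%nat ->
    mv n W (vvec n) k = lambda14 n * vvec n k /\
    Jinvmul n (mv n W (Jmul n (vvec n))) k = lambda14 n * vvec n k.
Proof.
  intros Hn Hm Ha Hdar HD HH W k Hk.
  assert (Hcf := ngon_collision_free n alpha Hn Ha).
  assert (Hrad := darboux_radius n m alpha Hn Hm Ha (Hdar 0%nat ltac:(lia))).
  assert (Heig : forall b k', (k' < 2 * n)%nat -> mv n W (wvec n b) k' = lambda14 n * wvec n b k').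
  { intros b k' Hk'. unfold mv, W.
    rewrite (rsum_ext _ _ (fun l => / m * (hess n m (ngon n alpha) k' l * wvec n b l))).
    - rewrite rsum_scal, polygon_hess_eigen by auto. field. lra.
    - intros l Hl. rewrite (hessian_unique n m (ngon n alpha) D k' l (H k' l)); auto.
      field. lra. }
  split.
  - rewrite (mv_ext _ _ _ (wvec n 0)), Heig, vvec_wvec; auto; try lia.
    intros l _. apply vvec_wvec. lia.
  - rewrite (Jinvmul_ext _ _ (fun l => lambda14 n * wvec n (PI / 2) l)), Jinvmul_scal, Jinvmul_wvec;
      auto; try lia.
    intros l Hl. rewrite <- Heig by auto. apply mv_ext. intros l' Hl'. apply Jmul_vvec; lia.
Qed.
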